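(* Let $G$ be a strongly regular graph with parameters $(n,d,\lambda,\mu)$ and let $t=\sqrt{(\mu-\lambda)^2+4(d-\mu)}$. Then $\chi_v(G)=1+\frac{2d}{t+\mu-\lambda}=\chi_{sv}(G)$ and $\chi_v(\overline{G})=\frac{n(t+\mu-\lambda)}{2d+t+\mu-\lambda}=\chi_{sv}(\overline{G})$. Consequently $\chi_v(\overline{G})=\frac{n}{\chi_v(G)}$ and $\chi_{sv}(\overline{G})=\frac{n}{\chi_{sv}(G)}$.
   Context: A strongly regular graph with parameters $(n,d,\lambda,\mu)$ is a $d$-regular graph on $n$ vertices, neither complete nor edgeless, in which adjacent vertices have exactly $\lambda$ common neighbours and distinct nonadjacent vertices exactly $\mu$ common neighbours; $\overline{G}$ is the complement. For a graph on $n$ vertices with at least one edge, a vector $t$-coloring ($t\ge2$) assigns unit vectors $u_i\in\mathbb R^n$ to vertices with $u_i^{\mathrm T}u_j\le-\frac1{t-1}$ for every edge $\{i,j\}$, and a strict vector $t$-coloring requires equality on every edge; $\chi_v$ and $\chi_{sv}$ are the smallest $t\ge2$ admitting a vector, resp. strict vector, $t$-coloring (both equal $1$ for edgeless graphs). *)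

From HB Require Import structures.
From mathcomp Require Import all_boot all_order all_algebra.
From mathcomp Require Import boolp classical_sets reals.
Set Implicit Arguments. Unset Strict Implicit. Unset Printing Implicit Defensive.
Import Order.TTheory GRing.Theory Num.Theory.
Local Open Scope ring_scope.
Local Open Scope classical_set_scope.

Definition simple_graph (T : finType) (e : rel T) : Prop :=
  (forall x y, e x y = e y x) /\ (forall x, ~~ e x x).

Definition compl_graph (T : finType) (e : rel T) : rel T :=
  fun x y => (x != y) && ~~ e x y.

Definition has_edge (T : finType) (e : rel T) : Prop := exists x y, e x y.

Definition srg (T : finType) (e : rel T) (n d lam mu : nat) : Prop :=
  simple_graph e /\
  #|T| = n /\
  (forall x, #|[set y | e x y]| = d) /\
  has_edge e /\
  (exists x y, (x != y) && ~~ e x y) /\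
  (forall x y, e x y -> #|[set z | e x z && e y z]| = lam) /\
  (forall x y, x != y -> ~~ e x y -> #|[set z | e x z && e y z]| = mu).

Definition dotv (R : realType) (n : nat) (u v : 'cV[R]_n) : R :=
  \sum_(i < n) u i 0 * v i 0.

Definition vector_coloring (R : realType) (T : finType) (e : rel T) (t : R) : Prop :=
  exists u : T -> 'cV[R]_#|T|,
    (forall i, dotv (u i) (u i) = 1) /\
    (forall i j, e i j -> dotv (u i) (u j) <= - (t - 1)^-1).

Definition strict_vector_coloring (R : realType) (T : finType) (e : rel T) (t : R) : Prop :=
  exists u : T -> 'cV[R]_#|T|,
    (forall i, dotv (u i) (u i) = 1) /\
    (forall i j, e i j -> dotv (u i) (u j) = - (t - 1)^-1).

Definition chi_v (R : realType) (T : finType) (e : rel T) : R :=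
  if `[< has_edge e >] then inf [set t : R | 2 <= t /\ vector_coloring e t]
  else 1.

Definition chi_sv (R : realType) (T : finType) (e : rel T) : R :=
  if `[< has_edge e >] then inf [set t : R | 2 <= t /\ strict_vector_coloring e t]
  else 1.

From HB Require Import structures.
From mathcomp Require Import all_boot all_order all_algebra.
From mathcomp Require Import boolp classical_sets reals.
From mathcomp Require Import ring lra.
Import Order.TTheory GRing.Theory Num.Theory.
Set Implicit Arguments.
Unset Strict Implicit.
Unset Printing Implicit Defensive.
Local Open Scope ring_scope.

(* The adjacency matrix A of a strongly regular graph satisfies
   A^2 = (lam - mu) A + (d - mu) I + mu J, so away from the all-ones vector its
   eigenvalues are the roots r >= 0 > s of x^2 - (lam - mu) x - (d - mu), and t = r - s.
   Pairing the Gram matrix X of a vector tau-coloring with the positive semidefinite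
   matrix (A - sI - gJ)^2 = (r - s)(A - sI) + cJ, where g = (d - s)/n and c <= 0, gives
   <A, X> >= s n, while <A, X> <= - n d / (tau - 1); hence tau >= 1 - d/s.  Conversely
   rI + ((d - r)/n) J - A is r - s times the projection onto the s-eigenspace, so its
   normalised columns are unit vectors with inner product s/d on every edge: a strict
   vector coloring with tau = 1 - d/s.  The complement is strongly regular with
   eigenvalues -1 - s and -1 - r, and mu n = (d - r)(d - s) turns its value into
   n / (1 - d/s). *)

Definition adj (R : realType) (T : finType) (e : rel T) (x y : T) : R := (e x y)%:R.
Definition delta (R : realType) (T : finType) (x y : T) : R := (x == y)%:R.

Definition bose_mesner (R : realType) (T : finType) (e : rel T) (a b c : R) (x y : T) : R :=
  a * delta R x y + b + c * adj R e x y.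

Lemma deltaC (R : realType) (T : finType) (x y : T) : delta R x y = delta R y x.
Proof. by rewrite /delta eq_sym. Qed.

Lemma delta_neq (R : realType) (T : finType) (x y : T) : x != y -> delta R x y = 0.
Proof. by rewrite /delta => /negbTE ->. Qed.

Lemma sum_delta (R : realType) (T : finType) (i : T) (f : T -> R) :
  \sum_x delta R x i * f x = f i.
Proof.
rewrite (bigD1 i) //= /delta eqxx mul1r big1 ?addr0 // => x /negbTE ->.
by rewrite mul0r.
Qed.

Lemma sum_indicator (R : realType) (T : finType) (P : pred T) :
  \sum_y ((P y)%:R : R) = #|[set y | P y]%classic|%:R.
Proof.
rewrite (eq_bigr (fun y => if P y then 1 else 0)); last by move=> y _; case: (P y).
rewrite -big_mkcond /= sumr_const; congr (_ *+ _); apply: eq_card => y.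
by apply/idP/idP => [Py | /set_mem //]; apply: mem_set.
Qed.

Lemma compl_graph_sym (T : finType) (e : rel T) :
  (forall x y, e x y = e y x) -> forall x y, compl_graph e x y = compl_graph e y x.
Proof. by move=> e_sym x y; rewrite /compl_graph eq_sym e_sym. Qed.

Lemma compl_graph_irr (T : finType) (e : rel T) x : ~~ compl_graph e x x.
Proof. by rewrite /compl_graph eqxx. Qed.

Lemma compl_has_edge (T : finType) (e : rel T) :
  (exists x y, (x != y) && ~~ e x y) -> has_edge (compl_graph e).
Proof. by case=> x [y nexy]; exists x, y. Qed.

Lemma gram_form_ge0 (R : realType) (I : finType) (n : nat) (u : I -> 'cV[R]_n)
    (w : I -> R) :
  0 <= \sum_i \sum_j w i * w j * dotv (u i) (u j).
Proof.
have -> : \sum_i \sum_j w i * w j * dotv (u i) (u j) =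
    \sum_(l < n) (\sum_i w i * u i l 0) ^+ 2.
  under [RHS]eq_bigr => l _ do rewrite expr2 big_distrl; rewrite [RHS]exchange_big.
  apply: eq_bigr => i _ /=; under [RHS]eq_bigr => l _ do rewrite big_distrr.
  rewrite [RHS]exchange_big; apply: eq_bigr => j _ /=.
  by rewrite /dotv mulr_sumr; apply: eq_bigr => l _; ring.
by apply: sumr_ge0 => l _; apply: sqr_ge0.
Qed.

Lemma gram_sum_form_ge0 (R : realType) (I K : finType) (n : nat)
    (u : I -> 'cV[R]_n) (W : K -> I -> R) :
  0 <= \sum_i \sum_j (\sum_k W k i * W k j) * dotv (u i) (u j).
Proof.
have -> : \sum_i \sum_j (\sum_k W k i * W k j) * dotv (u i) (u j) =
    \sum_k \sum_i \sum_j W k i * W k j * dotv (u i) (u j).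
  rewrite [RHS]exchange_big; apply: eq_bigr => i _ /=.
  rewrite [RHS]exchange_big; apply: eq_bigr => j _ /=.
  by rewrite mulr_suml.
by apply: sumr_ge0 => k _; apply: gram_form_ge0.
Qed.

Lemma dotv_pair_ge0 (R : realType) (n : nat) (u v : 'cV[R]_n) :
  0 <= dotv u u + 2 * dotv u v + dotv v v.
Proof.
have -> : dotv u u + 2 * dotv u v + dotv v v = \sum_(l < n) (u l 0 + v l 0) ^+ 2.
  by rewrite /dotv mulr_sumr -!big_split /=; apply: eq_bigr => l _; ring.
by apply: sumr_ge0 => l _; apply: sqr_ge0.
Qed.

Definition colvec (R : realType) (T : finType) (f : T -> R) : 'cV[R]_#|T| :=
  \col_l f (enum_val (A := T) l).

Lemma dotv_colvec (R : realType) (T : finType) (f g : T -> R) :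
  dotv (colvec f) (colvec g) = \sum_x f x * g x.
Proof.
rewrite /dotv; under eq_bigr do rewrite !mxE.
by rewrite -(big_enum_val (A := T) (fun x => f x * g x)).
Qed.

Lemma strict_vector_coloringW (R : realType) (T : finType) (e : rel T) (t : R) :
  strict_vector_coloring e t -> vector_coloring e t.
Proof. by case=> u [u1 ue]; exists u; split => // i j /ue ->. Qed.

Lemma inf_min (R : realType) (S : set R) (x : R) :
  S x -> (forall y, S y -> x <= y) -> inf S = x.
Proof.
move=> Sx x_lb; apply: le_anti; rewrite lb_le_inf ?andbT //; last by exists x.
by apply: ge_inf => //; exists x.
Qed.

Section StronglyRegular.

Variables (R : realType) (T : finType) (e : rel T) (D L M : R).
Hypothesis e_sym : forall x y, e x y = e y x.
Hypothesis e_irr : forall x, ~~ e x x.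
Hypothesis adj_row_sum : forall x, \sum_y adj R e x y = D.
Hypothesis adj_sqr : forall x z,
  \sum_y adj R e x y * adj R e y z = M + (D - M) * delta R x z + (L - M) * adj R e x z.

Local Notation N := (#|T|%:R : R).

Lemma adjC x y : adj R e x y = adj R e y x.
Proof. by rewrite /adj e_sym. Qed.

Lemma bose_mesner_mul a b c a' b' c' i j :
  \sum_x bose_mesner e a b c x i * bose_mesner e a' b' c' x j =
  bose_mesner e (a * a' + c * c' * (D - M))
    (a * b' + b * a' + b * b' * N + (b * c' + c * b') * D + c * c' * M)
    (a * c' + c * a' + c * c' * (L - M)) i j.
Proof.
have expand x : bose_mesner e a b c x i * bose_mesner e a' b' c' x j =
    a * a' * (delta R x i * delta R x j) + a * b' * (delta R x i * 1)
    + a * c' * (delta R x i * adj R e x j) + b * a' * (delta R x j * 1)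
    + b * b' + b * c' * adj R e j x + c * a' * (delta R x j * adj R e x i)
    + c * b' * adj R e i x + c * c' * (adj R e i x * adj R e x j).
  by rewrite /bose_mesner (adjC x i) (adjC x j); ring.
rewrite (eq_bigr _ (fun x _ => expand x)) !big_split /= -!mulr_sumr !sum_delta.
rewrite !adj_row_sum adj_sqr sumr_const (adjC j i) cardT -cardE /bose_mesner.
ring.
Qed.

Lemma srg_count (x : T) : D * D = M * N + (D - M) + (L - M) * D.
Proof.
have := congr1 (fun f => \sum_z f z) (funext (adj_sqr x)) => /=.
rewrite exchange_big /=.
under eq_bigr => y _ do rewrite -mulr_sumr adj_row_sum.
rewrite -mulr_suml !adj_row_sum => ->.
rewrite !big_split /= -!mulr_sumr adj_row_sum sumr_const cardT -cardE.
under eq_bigr => z _ do rewrite deltaC -[delta R z x]mulr1.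
by rewrite (sum_delta x (fun=> 1)) -mulr_natr; ring.
Qed.

Lemma adj_bound x y : 0 <= adj R e x y <= 1.
Proof. by rewrite /adj; case: (e x y); rewrite lexx ler01. Qed.

Lemma adj_diag x : adj R e x x = 0.
Proof. by rewrite /adj (negbTE (e_irr x)). Qed.

Lemma adj_mul_le x y z : adj R e x y * adj R e y z <= adj R e x y.
Proof.
by have /andP[? ?] := adj_bound x y; have /andP[? ?] := adj_bound y z; rewrite ler_piMr.
Qed.

Lemma srg_deg_ge1 : has_edge e -> 1 <= D.
Proof.
case=> x [y exy]; rewrite -(adj_row_sum x) (bigD1 y) //= {1}/adj exy lerDl.
by apply: sumr_ge0 => z _; case/andP: (adj_bound x z).
Qed.

Lemma srg_lam_le : has_edge e -> L <= D - 1.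
Proof.
case=> x [y exy]; have ne_xy : x != y by apply: contraTneq exy => ->.
have adj_xy : adj R e x y = 1 by rewrite /adj exy.
have : \sum_z adj R e x z * adj R e z y <= \sum_z (adj R e x z - delta R z y * adj R e x z).
  apply: ler_sum => z _; have [->|ne_zy] := eqVneq z y.
    by rewrite adj_diag /delta eqxx mulr0 mul1r subrr.
  by rewrite delta_neq // mul0r subr0 adj_mul_le.
by rewrite adj_sqr sumrB sum_delta adj_row_sum delta_neq // adj_xy; lra.
Qed.

Lemma srg_mu_le : (exists x y, (x != y) && ~~ e x y) -> M <= D.
Proof.
case=> x [y /andP[ne_xy nexy]].
have adj_xy : adj R e x y = 0 by rewrite /adj (negbTE nexy).
have : \sum_z adj R e x z * adj R e z y <= \sum_z adj R e x z.
  by apply: ler_sum => z _; apply: adj_mul_le.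
by rewrite adj_sqr adj_row_sum delta_neq // adj_xy; lra.
Qed.

Lemma adj_compl x y : adj R (compl_graph e) x y = bose_mesner e (-1) 1 (-1) x y.
Proof.
rewrite /bose_mesner /adj /delta /compl_graph.
have [->|ne_xy] := eqVneq x y; first by rewrite (negbTE (e_irr y)) /=; ring.
by case: (e x y) => /=; ring.
Qed.

Lemma compl_row_sum x : \sum_y adj R (compl_graph e) x y = N - D - 1.
Proof.
under eq_bigr => y _ do rewrite adj_compl /bose_mesner deltaC -[delta R y x]mulr1.
rewrite !big_split /= -!mulr_sumr (sum_delta x (fun=> 1)) adj_row_sum sumr_const.
by rewrite cardT -cardE -mulr_natr; ring.
Qed.

Lemma compl_adj_sqr x z :
  \sum_y adj R (compl_graph e) x y * adj R (compl_graph e) y z =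
  (N - 2 * D + L) + ((N - D - 1) - (N - 2 * D + L)) * delta R x z
  + ((N - 2 * D + M - 2) - (N - 2 * D + L)) * adj R (compl_graph e) x z.
Proof.
under eq_bigr => y _ do rewrite !adj_compl [bose_mesner _ _ _ _ x y]/bose_mesner deltaC adjC.
rewrite bose_mesner_mul adj_compl /bose_mesner; ring.
Qed.

Lemma bose_mesner_gram a b c (u : T -> 'cV[R]_#|T|) :
  (forall i, dotv (u i) (u i) = 1) ->
  \sum_i \sum_j bose_mesner e a b c i j * dotv (u i) (u j) =
  a * N + b * (\sum_i \sum_j dotv (u i) (u j))
  + c * (\sum_i \sum_j adj R e i j * dotv (u i) (u j)).
Proof.
move=> u1.
have row i : \sum_j bose_mesner e a b c i j * dotv (u i) (u j) =
    a * dotv (u i) (u i) + b * (\sum_j dotv (u i) (u j))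
    + c * (\sum_j adj R e i j * dotv (u i) (u j)).
  rewrite -(sum_delta i (fun j => dotv (u i) (u j))) !mulr_sumr -!big_split /=.
  by apply: eq_bigr => j _; rewrite /bose_mesner deltaC; ring.
rewrite (eq_bigr _ (fun i _ => row i)) !big_split /= -!mulr_sumr.
by rewrite (eq_bigr (fun=> 1) (fun i _ => u1 i)) sumr_const.
Qed.

Variables r s : R.
Hypothesis eig_sum : r + s = L - M.
Hypothesis eig_prod : r * s = M - D.
Hypothesis e_edge : has_edge e.

Lemma has_edge_card_ge1 : 1 <= N.
Proof. by case: e_edge => x _; rewrite ler1n; apply/card_gt0P; exists x. Qed.

Lemma srg_mu_card : M * N = (D - r) * (D - s).
Proof.
case: e_edge => x _; have := srg_count x.
have -> : (D - r) * (D - s) = D * D - (r + s) * D + r * s by ring.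
by rewrite eig_sum eig_prod; lra.
Qed.

Lemma adj_gram_ge (s_lt0 : s < 0) (r_ge0 : 0 <= r) (u : T -> 'cV[R]_#|T|) :
  (forall i, dotv (u i) (u i) = 1) ->
  s * N <= \sum_i \sum_j adj R e i j * dotv (u i) (u j).
Proof.
move=> u1; have N_gt0 : 0 < N by have := has_edge_card_ge1; lra.
have D_gt0 : 0 < D by have := srg_deg_ge1 e_edge; lra.
pose g := (D - s) / N.
pose c := 2 * s * g + g ^+ 2 * N - 2 * g * D + M.
have c_le0 : c <= 0.
  have gN : g * N = D - s by rewrite /g mulfVK //; lra.
  have cN : c * N = (D - s) * (s - r).
    have -> : c * N = 2 * s * (g * N) + (g * N) ^+ 2 - 2 * D * (g * N) + M * N.
      by rewrite /c; ring.
    by rewrite gN srg_mu_card; ring.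
  have : c * N <= 0 by rewrite cN pmulr_rle0; lra.
  by rewrite pmulr_lle0.
have sqr_ij i j : \sum_k bose_mesner e (- s) (- g) 1 k i * bose_mesner e (- s) (- g) 1 k j =
    bose_mesner e (- ((r - s) * s)) c (r - s) i j.
  rewrite bose_mesner_mul; congr bose_mesner.
  - by rewrite -[D - M]opprB -eig_prod; ring.
  - by rewrite /c; ring.
  - by rewrite -eig_sum; ring.
have := gram_sum_form_ge0 u (bose_mesner e (- s) (- g) 1).
under eq_bigr => i _ do under eq_bigr => j _ do rewrite sqr_ij.
rewrite bose_mesner_gram //.
have := gram_form_ge0 u (fun=> 1); under eq_bigr => i _ do under eq_bigr => j _ do rewrite !mul1r.
set SX := \sum_i \sum_j dotv (u i) (u j).
set SA := \sum_i \sum_j adj R e i j * dotv (u i) (u j).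
move=> SX_ge0 pos.
have : 0 <= (r - s) * (SA - s * N) by have := mulr_le0_ge0 c_le0 SX_ge0; lra.
by rewrite pmulr_rge0; lra.
Qed.

Lemma vector_coloring_ge (s_lt0 : s < 0) (r_ge0 : 0 <= r) tau :
  2 <= tau -> vector_coloring e tau -> 1 - D / s <= tau.
Proof.
move=> tau_ge2 [u [u1 u_edge]]; have N_gt0 : 0 < N by have := has_edge_card_ge1; lra.
set k := (tau - 1)^-1.
have k_gt0 : 0 < k by rewrite invr_gt0; lra.
have SA_le : \sum_i \sum_j adj R e i j * dotv (u i) (u j) <= \sum_(i : T) - k * D.
  apply: ler_sum => i _; rewrite -(adj_row_sum i) mulr_sumr.
  apply: ler_sum => j _; rewrite mulrC /adj.
  by case: (boolP (e i j)) => [/u_edge|_]; rewrite ?mulr1 ?mulr0.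
have : s * N <= - k * D * N.
  apply: le_trans (adj_gram_ge s_lt0 r_ge0 u1) _.
  by rewrite (le_trans SA_le) // sumr_const mulr_natr.
rewrite ler_pM2r // => s_le.
have k_inv : k * (tau - 1) = 1 by rewrite mulVf //; apply/eqP; lra.
have : (tau - 1) * s <= - D by nra.
rewrite -ler_ndivrMr // mulNr; lra.
Qed.

Lemma eig_proj_sqr i j :
  \sum_x bose_mesner e r ((D - r) / N) (-1) x i * bose_mesner e r ((D - r) / N) (-1) x j =
  (r - s) * bose_mesner e r ((D - r) / N) (-1) i j.
Proof.
have N_neq0 : N != 0 by apply/eqP; have := has_edge_card_ge1; lra.
have M_div : M = (D - r) * (D - s) / N by rewrite -srg_mu_card mulfK.
rewrite bose_mesner_mul /bose_mesner -[D - M]opprB -eig_prod -eig_sum M_div.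
by field.
Qed.

Lemma eig_proj_diag_gt0 (r_ge0 : 0 <= r) : 0 < r + (D - r) / N.
Proof.
have N_ge1 := has_edge_card_ge1; have D_ge1 := srg_deg_ge1 e_edge.
rewrite -(pmulr_lgt0 _ (_ : 0 < N)); last by lra.
have -> : (r + (D - r) / N) * N = r * (N - 1) + D by field; apply/eqP; lra.
have : 0 <= r * (N - 1) by apply: mulr_ge0; lra.
lra.
Qed.

Lemma eig_proj_edge_ratio (r_ge0 : 0 <= r) :
  ((D - r) / N - 1) / (r + (D - r) / N) = s / D.
Proof.
have N_ge1 := has_edge_card_ge1; have D_ge1 := srg_deg_ge1 e_edge.
have diag_gt0 := eig_proj_diag_gt0 r_ge0.
apply/eqP; rewrite eqr_div; try by apply/eqP; lra.
apply/eqP; apply: (mulIf (_ : N != 0)); first by apply/eqP; lra.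
apply/eqP; rewrite -subr_eq0; apply/eqP.
have M_eq : M = D + r * s by rewrite eig_prod; ring.
have -> : ((D - r) / N - 1) * D * N - s * (r + (D - r) / N) * N =
    (D - r) * (D - s) - M * N by rewrite M_eq; field; apply/eqP; lra.
by rewrite srg_mu_card subrr.
Qed.

Lemma eig_coloring_vectors (s_lt0 : s < 0) (r_ge0 : 0 <= r) :
  exists u : T -> 'cV[R]_#|T|,
    (forall i, dotv (u i) (u i) = 1) /\ (forall i j, e i j -> dotv (u i) (u j) = s / D).
Proof.
set c0 := (D - r) / N; set F := bose_mesner e r c0 (-1).
have diag_gt0 : 0 < r + c0 := eig_proj_diag_gt0 r_ge0.
pose S := Num.sqrt ((r - s) * (r + c0)).
have S2 : S ^+ 2 = (r - s) * (r + c0) by rewrite sqr_sqrtr // mulr_ge0 //; lra.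
have S_gt0 : 0 < S by rewrite sqrtr_gt0 mulr_gt0 //; lra.
exists (fun i => colvec (fun x => F x i / S)).
have dot i j : dotv (colvec (fun x => F x i / S)) (colvec (fun x => F x j / S)) =
    F i j / (r + c0).
  rewrite dotv_colvec.
  have -> : \sum_x F x i / S * (F x j / S) = (\sum_x F x i * F x j) / S ^+ 2.
    by rewrite mulr_suml; apply: eq_bigr => x _; field; apply/eqP; lra.
  by rewrite eig_proj_sqr -/c0 -/F S2; field; apply/andP; split; apply/eqP; lra.
split=> [i | i j eij]; rewrite dot /F /bose_mesner.
  by rewrite /delta eqxx adj_diag mulr1 mulr0 addr0 divff //; apply/eqP; lra.
have adj_ij : adj R e i j = 1 by rewrite /adj eij.
rewrite delta_neq; last by apply: contraTneq eij => ->.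
by rewrite adj_ij mulr0 add0r mulN1r eig_proj_edge_ratio.
Qed.

Lemma strict_vector_coloring_srg (s_lt0 : s < 0) (r_ge0 : 0 <= r) :
  strict_vector_coloring e (1 - D / s).
Proof.
have [u [u1 u_edge]] := eig_coloring_vectors s_lt0 r_ge0.
have D_ge1 := srg_deg_ge1 e_edge.
exists u; split=> // i j /u_edge ->; field.
by apply/and3P; split; apply/eqP; lra.
Qed.

Lemma srg_coloring_ge2 (s_lt0 : s < 0) (r_ge0 : 0 <= r) : 2 <= 1 - D / s.
Proof.
have [u [u1 u_edge]] := eig_coloring_vectors s_lt0 r_ge0.
have D_gt0 : 0 < D by have := srg_deg_ge1 e_edge; lra.
have [i [j eij]] := e_edge; have := dotv_pair_ge0 (u i) (u j).
rewrite !u1 u_edge // => pair_ge0.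
have : -1 <= s / D by lra.
rewrite ler_pdivlMr // mulN1r => s_ge.
have : 1 <= - D / s by rewrite ler_ndivlMr // mul1r.
by rewrite mulNr; lra.
Qed.

Lemma chi_v_srg (s_lt0 : s < 0) (r_ge0 : 0 <= r) : chi_v R e = 1 - D / s.
Proof.
rewrite /chi_v asboolT //; apply: inf_min.
  split; first exact: srg_coloring_ge2.
  exact/strict_vector_coloringW/strict_vector_coloring_srg.
by move=> tau [tau_ge2 col]; apply: vector_coloring_ge.
Qed.

Lemma chi_sv_srg (s_lt0 : s < 0) (r_ge0 : 0 <= r) : chi_sv R e = 1 - D / s.
Proof.
rewrite /chi_sv asboolT //; apply: inf_min.
  by split; [exact: srg_coloring_ge2 | exact: strict_vector_coloring_srg].
by move=> tau [tau_ge2 /strict_vector_coloringW col]; apply: vector_coloring_ge.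
Qed.

Lemma compl_eig_ratio (s_lt0 : s < 0) (r_ge0 : 0 <= r) :
  1 - (N - D - 1) / (-1 - r) = N / (1 - D / s).
Proof.
have D_gt0 : 0 < D by have := srg_deg_ge1 e_edge; lra.
have -> : 1 - (N - D - 1) / (-1 - r) = (N + r - D) / (1 + r).
  by field; apply/andP; split; apply/eqP; lra.
have -> : N / (1 - D / s) = N * s / (s - D) by field; apply/andP; split; apply/eqP; lra.
apply/eqP; rewrite eqr_div; try by apply/eqP; lra.
rewrite -subr_eq0; apply/eqP.
have -> : (N + r - D) * (s - D) - N * s * (1 + r) = (D - r) * (D - s) - (D + r * s) * N.
  by ring.
by rewrite -srg_mu_card eig_prod; ring.
Qed.

End StronglyRegular.

Lemma srg_eigenvalues (R : rcfType) (D L M : R) :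
  L <= D - 1 -> M <= D ->
  let t := Num.sqrt ((M - L) ^+ 2 + 4 * (D - M)) in
  [/\ (L - M + t) / 2 + (L - M - t) / 2 = L - M,
      (L - M + t) / 2 * ((L - M - t) / 2) = M - D,
      0 <= (L - M + t) / 2 & (L - M - t) / 2 <= -1].
Proof.
move=> L_le M_le t.
have t2 : t ^+ 2 = (M - L) ^+ 2 + 4 * (D - M).
  by rewrite sqr_sqrtr // addr_ge0 ?sqr_ge0 //; lra.
have le_t x : x ^+ 2 <= (M - L) ^+ 2 + 4 * (D - M) -> x <= t.
  by move=> x2; rewrite (le_trans (ler_norm x)) // -sqrtr_sqr ler_wsqrtr.
have t_ge1 : M - L <= t by apply: le_t; lra.
have t_ge2 : L - M + 2 <= t by apply: le_t; nra.
split; [by field | | by lra | by lra].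
have -> : (L - M + t) / 2 * ((L - M - t) / 2) = ((L - M) ^+ 2 - t ^+ 2) / 4 by field.
by rewrite t2; field.
Qed.

Lemma srg_adj_row_sum (R : realType) (T : finType) (e : rel T) (n d lam mu : nat) :
  srg e n d lam mu -> forall x, \sum_y adj R e x y = d%:R.
Proof. by case=> _ [_ [deg _]] x; rewrite /adj (sum_indicator R (e x)) deg. Qed.

Lemma srg_adj_sqr (R : realType) (T : finType) (e : rel T) (n d lam mu : nat) :
  srg e n d lam mu -> forall x z, \sum_y adj R e x y * adj R e y z =
    mu%:R + (d%:R - mu%:R) * delta R x z + (lam%:R - mu%:R) * adj R e x z.
Proof.
case=> [[e_sym e_irr] [_ [deg [_ [_ [lam_card mu_card]]]]]] x z.
under eq_bigr => y _ do rewrite /adj -natrM -[e y z]e_sym mulnb.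
have [<-|ne_xz] := eqVneq x z.
  under eq_bigr do rewrite andbb.
  by rewrite (sum_indicator R (e x)) deg /delta eqxx /adj (negbTE (e_irr x)) /=; ring.
rewrite (sum_indicator R (fun y => e x y && e z y)) delta_neq // /adj.
by case: (boolP (e x z)) => [exz | nexz]; [rewrite lam_card | rewrite mu_card] => //=; ring.
Qed.

Lemma chi_compl_srg (R : realType) (T : finType) (e : rel T) (D L M r s : R) :
  (forall x y, e x y = e y x) -> (forall x, ~~ e x x) ->
  (forall x, \sum_y adj R e x y = D) ->
  (forall x z, \sum_y adj R e x y * adj R e y z =
     M + (D - M) * delta R x z + (L - M) * adj R e x z) ->
  r + s = L - M -> r * s = M - D -> 0 <= r -> s <= -1 ->
  has_edge e -> (exists x y, (x != y) && ~~ e x y) ->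
  chi_v R (compl_graph e) = #|T|%:R / chi_v R e /\
  chi_sv R (compl_graph e) = #|T|%:R / chi_sv R e.
Proof.
move=> e_sym e_irr row sqr eig_sum eig_prod r_ge0 s_le edge nonedge.
have s_lt0 : s < 0 by lra.
have eig_sum' : (-1 - s) + (-1 - r) =
    (#|T|%:R - 2 * D + M - 2) - (#|T|%:R - 2 * D + L) by lra.
have eig_prod' : (-1 - s) * (-1 - r) = (#|T|%:R - 2 * D + L) - (#|T|%:R - D - 1).
  have -> : (-1 - s) * (-1 - r) = 1 + (r + s) + r * s by ring.
  by rewrite eig_sum eig_prod; ring.
have [row' sqr'] := (compl_row_sum e_irr row, compl_adj_sqr e_sym e_irr row sqr).
have [edge' sym'] := (compl_has_edge nonedge, compl_graph_sym e_sym).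
have [s'_lt0 r'_ge0] : -1 - r < 0 /\ 0 <= -1 - s by split; lra.
rewrite (chi_v_srg sym' (@compl_graph_irr _ e) row' sqr' eig_sum' eig_prod' edge' s'_lt0 r'_ge0).
rewrite (chi_sv_srg sym' (@compl_graph_irr _ e) row' sqr' eig_sum' eig_prod' edge' s'_lt0 r'_ge0).
rewrite (chi_v_srg e_sym e_irr row sqr eig_sum eig_prod edge s_lt0 r_ge0).
rewrite (chi_sv_srg e_sym e_irr row sqr eig_sum eig_prod edge s_lt0 r_ge0).
by rewrite (compl_eig_ratio row sqr eig_sum eig_prod edge s_lt0 r_ge0).
Qed.

Theorem mainTheorem10 (R : realType) (T : finType) (e : rel T) (n d lam mu : nat) :
  srg e n d lam mu ->
  let t : R := Num.sqrt ((mu%:R - lam%:R) ^+ 2 + 4 * (d%:R - mu%:R)) in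
  (chi_v R e = 1 + 2 * d%:R / (t + mu%:R - lam%:R) /\
   chi_sv R e = 1 + 2 * d%:R / (t + mu%:R - lam%:R)) /\
  (chi_v R (compl_graph e) =
     n%:R * (t + mu%:R - lam%:R) / (2 * d%:R + t + mu%:R - lam%:R) /\
   chi_sv R (compl_graph e) =
     n%:R * (t + mu%:R - lam%:R) / (2 * d%:R + t + mu%:R - lam%:R)) /\
  (chi_v R (compl_graph e) = n%:R / chi_v R e /\
   chi_sv R (compl_graph e) = n%:R / chi_sv R e).
Proof.
move=> G t; have [[e_sym e_irr] [card_T [_ [edge [nonedge _]]]]] := G.
have row := srg_adj_row_sum R G; have sqr := srg_adj_sqr R G.
have [eig_sum eig_prod r_ge0 s_le] :=
  srg_eigenvalues (srg_lam_le e_irr row sqr edge) (srg_mu_le row sqr nonedge).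
rewrite -/t in eig_sum eig_prod r_ge0 s_le.
have s_lt0 : (lam%:R - mu%:R - t) / 2 < 0 by lra.
have [chi_c chi_sc] :=
  chi_compl_srg e_sym e_irr row sqr eig_sum eig_prod r_ge0 s_le edge nonedge.
rewrite chi_c chi_sc (chi_v_srg e_sym e_irr row sqr eig_sum eig_prod edge s_lt0 r_ge0).
rewrite (chi_sv_srg e_sym e_irr row sqr eig_sum eig_prod edge s_lt0 r_ge0) card_T.
have d_ge0 : 0 <= d%:R :> R by rewrite ler0n.
have -> : 1 - d%:R / ((lam%:R - mu%:R - t) / 2) = 1 + 2 * d%:R / (t + mu%:R - lam%:R).
  by field; apply/andP; split; apply/eqP; lra.
have -> : n%:R / (1 + 2 * d%:R / (t + mu%:R - lam%:R)) =
    n%:R * (t + mu%:R - lam%:R) / (2 * d%:R + t + mu%:R - lam%:R).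
  by field; apply/andP; split; apply/eqP; lra.
by do !split.
Qed.
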